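(* Let $P$ be a simple $3$-polytope with facets $F_1,\dots,F_m$, numbered so that $F_1,F_2,F_3$ meet at a vertex, and let $\lambda$ be a characteristic function on $P$ such that $X(P,\lambda)$ is orientable; write $\lambda_i=\lambda(F_i)$ (so $\lambda_1,\lambda_2,\lambda_3$ is a basis of $\mathbb{Z}_2^3$). Then either $\operatorname{im}\lambda=\{\lambda_1,\lambda_2,\lambda_3\}$ or $\operatorname{im}\lambda=\{\lambda_1,\lambda_2,\lambda_3,\lambda_1+\lambda_2+\lambda_3\}$.
   Context: A characteristic function is a map $\lambda$ from the facets of $P$ to $\mathbb{Z}_2^3$ such that for every codimension-$k$ face $F=F_{i_1}\cap\dots\cap F_{i_k}$ the vectors $\lambda_{i_1},\dots,\lambda_{i_k}$ are linearly independent. $X(P,\lambda)=P\times\mathbb{Z}_2^3/\!\sim$ with $(p,a)\sim(q,b)$ iff $p=q$ and $b-a$ lies in the subgroup generated by the $\lambda_i$ with $F_i$ containing $p$. It is known that $X(P,\lambda)$ is orientable iff there is $\xi\in(\mathbb{Z}_2^3)^*$ with $\xi(\lambda_i)=1$ for all $i$. *)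

From HB Require Import structures.
From mathcomp Require Import all_boot all_order all_algebra.
From mathcomp Require Import reals.
Set Implicit Arguments. Unset Strict Implicit. Unset Printing Implicit Defensive.
Import Order.TTheory GRing.Theory Num.Theory.
Local Open Scope ring_scope.

(* A polytope in R^3 is given by an H-representation: P = { x | <a_i, x> <= b_i, i < m }. *)
Section Polytope.
Variables (R : realType) (m : nat) (a : 'I_m -> 'rV[R]_3) (b : 'I_m -> R).

Definition dotv (u v : 'rV[R]_3) : R := \sum_(j < 3) u 0 j * v 0 j.

Definition inP (x : 'rV[R]_3) : Prop := forall i, dotv (a i) x <= b i.

Definition on_facet (i : 'I_m) (x : 'rV[R]_3) : Prop := inP x /\ dotv (a i) x = b i.

(* P is a simple 3-polytope whose facets are exactly F_0, ..., F_{m-1}: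
   - bounded;
   - 3-dimensional (nonempty interior);
   - irredundant: each F_i contains a point lying on no other facet, so each
     F_i is a genuine facet and the F_i are pairwise distinct;
   - simple: no point of P lies on more than 3 facets (so every vertex lies on
     exactly 3 facets). *)
Definition simple_3polytope : Prop :=
  [/\ exists M : R, forall x, inP x -> forall j, `|x 0 j| <= M,
      exists x : 'rV[R]_3, forall i, dotv (a i) x < b i,
      forall i, exists x, [/\ inP x, dotv (a i) x = b i &
                              forall j, j != i -> dotv (a j) x < b j]
    & forall x, inP x -> (#|[set i | dotv (a i) x == b i]| <= 3)%N].

(* Characteristic function lambda : facets -> Z_2^3: for every face
   F = F_{i_1} ∩ ... ∩ F_{i_k} (i.e. every set S of facets with nonempty
   common intersection; in a simple polytope such an intersection is a face of
   codimension #|S|), the vectors lambda_i, i in S, are linearly independent. *)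
Definition characteristic_function (lam : 'I_m -> 'rV['F_2]_3) : Prop :=
  forall S : {set 'I_m},
    (exists x, forall i, i \in S -> on_facet i x) ->
    free [seq lam i | i <- enum S].

End Polytope.

(* Orientability of X(P, lambda), via the criterion recalled in the paper:
   there is xi in (Z_2^3)^* (represented by a column vector) with
   xi(lambda_i) = 1 for all i. *)
Definition orientable_X (m : nat) (lam : 'I_m -> 'rV['F_2]_3) : Prop :=
  exists xi : 'cV['F_2]_3, forall i, (lam i *m xi) 0 0 = 1.

From HB Require Import structures.
From mathcomp Require Import all_boot all_order all_algebra.
From mathcomp Require Import reals.
Set Implicit Arguments. Unset Strict Implicit. Unset Printing Implicit Defensive.
Import Order.TTheory GRing.Theory Num.Theory.
Local Open Scope ring_scope.

(* Write v = c1 l1 + c2 l2 + c3 l3 in the basis given by a vertex.  Then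
   xi(v) = c1 + c2 + c3, so xi(v) = 1 forces an odd number of nonzero c_k over
   F_2: v is one of l1, l2, l3 or l1 + l2 + l3. *)

Lemma F2_cases (c : 'F_2) : c = 0 \/ c = 1.
Proof. by case: c => -[|[|//]] ?; [left | right]; apply: val_inj. Qed.

Lemma free3_coords (K : fieldType) (vT : vectType K) (v1 v2 v3 v : vT) :
  \dim {:vT} = 3%N -> free [:: v1; v2; v3] ->
  exists c1 c2 c3, v = c1 *: v1 + c2 *: v2 + c3 *: v3.
Proof.
move=> dim3 freeX; pose X := [tuple v1; v2; v3].
have basisX : basis_of fullv X by rewrite basisEfree freeX subvf dim3.
rewrite (coord_basis basisX (memvf v)) !big_ord_recl big_ord0 addr0 addrA.
by do 3!eexists.
Qed.

Lemma F2_odd_combination3 (n : nat) (v1 v2 v3 : 'rV['F_2]_n) (c1 c2 c3 : 'F_2) :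
  c1 + c2 + c3 = 1 ->
  c1 *: v1 + c2 *: v2 + c3 *: v3 \in [set v1; v2; v3; v1 + v2 + v3].
Proof.
rewrite !inE.
by case: (F2_cases c1) => ->; case: (F2_cases c2) => ->; case: (F2_cases c3) => ->;
  rewrite ?scale0r ?scale1r ?add0r ?addr0 ?eqxx ?orbT.
Qed.

Lemma orientable_basis_image (v1 v2 v3 v : 'rV['F_2]_3) (xi : 'cV['F_2]_3) :
  free [:: v1; v2; v3] ->
  (v1 *m xi) 0 0 = 1 -> (v2 *m xi) 0 0 = 1 -> (v3 *m xi) 0 0 = 1 ->
  (v *m xi) 0 0 = 1 ->
  v \in [set v1; v2; v3; v1 + v2 + v3].
Proof.
move=> freeX; have [c1 [c2 [c3 ->]]] := free3_coords v (dimvf _) freeX.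
rewrite !mulmxDl -!scalemxAl !mxE => -> -> ->; rewrite !mulr1.
exact: F2_odd_combination3.
Qed.

Lemma characteristic_function_vertex_free (R : realType) (m : nat)
    (a : 'I_m -> 'rV[R]_3) (b : 'I_m -> R) (lam : 'I_m -> 'rV['F_2]_3)
    (i1 i2 i3 : 'I_m) :
  characteristic_function a b lam ->
  [/\ i1 != i2, i1 != i3 & i2 != i3] ->
  (exists x, [/\ on_facet a b i1 x, on_facet a b i2 x & on_facet a b i3 x]) ->
  free [:: lam i1; lam i2; lam i3].
Proof.
move=> charf [n12 n13 n23] [x [f1 f2 f3]].
have enumS : perm_eq (enum [set i1; i2; i3]) [:: i1; i2; i3].
  apply: uniq_perm; first exact: enum_uniq.
    by rewrite /= !inE negb_or n12 n13 n23.
  by move=> i; rewrite mem_enum !inE orbA.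
rewrite -(perm_free (perm_map lam enumS)); apply: charf.
by exists x => i; rewrite !inE -orbA => /or3P[] /eqP ->.
Qed.

Lemma subset_setU1_cases (T : finType) (A B : {set T}) (x : T) :
  B \subset A -> A \subset x |: B -> A = B \/ A = x |: B.
Proof.
move=> sBA sAxB; have [xA | xNA] := boolP (x \in A).
  by right; apply/eqP; rewrite eqEsubset sAxB subUset sub1set xA.
left; apply/eqP; rewrite eqEsubset sBA andbT; apply/subsetP => y yA.
by have := subsetP sAxB y yA; rewrite !inE => /predU1P[eyx | //]; rewrite -eyx yA in xNA.
Qed.

Theorem proposition3p1 (R : realType) (m : nat)
    (a : 'I_m -> 'rV[R]_3) (b : 'I_m -> R)
    (lam : 'I_m -> 'rV['F_2]_3) (i1 i2 i3 : 'I_m) :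
  simple_3polytope a b ->
  [/\ i1 != i2, i1 != i3 & i2 != i3] ->
  (exists x, [/\ on_facet a b i1 x, on_facet a b i2 x & on_facet a b i3 x]) ->
  characteristic_function a b lam ->
  orientable_X lam ->
  [set lam i | i in 'I_m] = [set lam i1; lam i2; lam i3] \/
  [set lam i | i in 'I_m] = [set lam i1; lam i2; lam i3; lam i1 + lam i2 + lam i3].
Proof.
move=> _ distinct vertex charf [xi xi1].
have freeV := characteristic_function_vertex_free charf distinct vertex.
set w := lam i1 + lam i2 + lam i3.
have -> : [set lam i1; lam i2; lam i3; w] = w |: [set lam i1; lam i2; lam i3].
  by apply/setP => v; rewrite !inE orbC !orbA.
apply: subset_setU1_cases.
  by apply/subsetP => v; rewrite !inE -orbA => /or3P[] /eqP ->; apply: imset_f.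
apply/subsetP => _ /imsetP[i _ ->].
have := orientable_basis_image freeV (xi1 i1) (xi1 i2) (xi1 i3) (xi1 i).
by rewrite !inE orbC !orbA.
Qed.
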